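(* Let $B\in\mathbb{R}^{k\times k}$ be symmetric positive definite, $D\in\mathbb{R}^{m\times k}$ of full row rank, $A\in\mathbb{R}^{k\times k}$, $C:\mathbb{R}^k\to\mathbb{R}^{k\times k}$, $\Pi=I-B^{-1}D^T(DB^{-1}D^T)^{-1}D$. Let $h>0$, $y_n\in\mathbb{R}^k$ with $Dy_n=0$, and real coefficients $a_{i,j}$ ($i=1,\dots,s+1$, $j\le i$, with $a_{s+1,s+1}=0$) and $\alpha^k_{i,\gamma}$ ($\gamma=1,\dots,J$). Suppose $Y_1,\dots,Y_{s+1}\in\mathbb{R}^k$ satisfy, for $i=1,\dots,s+1$, $$Y_i=\varphi_i y_n+h\sum_{j=1}^{i-1}a_{i,j}\,\varphi_i\varphi_j^{-1}\,\Pi B^{-1}AY_j+h\,a_{i,i}\,\Pi B^{-1}AY_i,$$ where $Y_i^\gamma:=\sum_k\alpha^k_{i,\gamma}Y_k$ and $\varphi_i:=\exp\!\big(h\Pi B^{-1}C(Y_i^J)\big)\cdots\exp\!\big(h\Pi B^{-1}C(Y_i^1)\big)$ (matrix exponentials). Then $DY_i=0$ for all $i$, and in particular $y_{n+1}:=Y_{s+1}$ satisfies $Dy_{n+1}=0$.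
   Context: This is a DIRK-CF method (a diagonally implicit Runge–Kutta method for the diffusion combined with a commutator-free exponential integrator for the convection, the exponentials being products of exponentials of linear combinations of stage convection operators) applied to the projected semi-discrete Navier–Stokes ODE $\dot y=\Pi B^{-1}Ay+\Pi B^{-1}C(y)y$. *)

From Stdlib Require Import Reals ClassicalEpsilon FunctionalExtensionality.
From HB Require Import structures.
From mathcomp Require Import all_boot all_order all_algebra.
Set Implicit Arguments. Unset Strict Implicit. Unset Printing Implicit Defensive.

Definition R_eqb (x y : R) : bool := if Req_dec_T x y then true else false.
Lemma R_eqP : Equality.axiom R_eqb.
Proof. by move=> x y; rewrite /R_eqb; case: Req_dec_T => h; constructor. Qed.
HB.instance Definition _ := hasDecEq.Build R R_eqP.

Definition R_find (P : pred R) (n : nat) : option R :=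
  match excluded_middle_informative (exists x, P x) with
  | left h => Some (proj1_sig (constructive_indefinite_description _ h))
  | right _ => None
  end.
Lemma R_find_correct P n x : R_find P n = Some x -> P x.
Proof.
rewrite /R_find; case: excluded_middle_informative => // h [<-].
exact: (proj2_sig (constructive_indefinite_description _ h)).
Qed.
Lemma R_find_complete (P : pred R) : (exists x, P x) -> exists n, R_find P n.
Proof. by move=> h; exists 0%N; rewrite /R_find; case: excluded_middle_informative. Qed.
Lemma R_find_ext (P Q : pred R) : P =1 Q -> R_find P =1 R_find Q.
Proof. by move=> /functional_extensionality ->. Qed.
HB.instance Definition _ := hasChoice.Build R R_find_correct R_find_complete R_find_ext.

Lemma R_addA : forall x y z : R, Rplus x (Rplus y z) = Rplus (Rplus x y) z. Proof. by move=> x y z; rewrite Rplus_assoc. Qed.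
Lemma R_addC : forall x y : R, Rplus x y = Rplus y x. Proof. exact: Rplus_comm. Qed.
Lemma R_add0 : forall x : R, Rplus R0 x = x. Proof. exact: Rplus_0_l. Qed.
Lemma R_addN : forall x : R, Rplus (Ropp x) x = R0. Proof. exact: Rplus_opp_l. Qed.
HB.instance Definition _ := GRing.isZmodule.Build R R_addA R_addC R_add0 R_addN.

Lemma R_mulA : forall x y z : R, Rmult x (Rmult y z) = Rmult (Rmult x y) z. Proof. by move=> x y z; rewrite Rmult_assoc. Qed.
Lemma R_mulC : forall x y : R, Rmult x y = Rmult y x. Proof. exact: Rmult_comm. Qed.
Lemma R_mul1 : forall x : R, Rmult R1 x = x. Proof. exact: Rmult_1_l. Qed.
Lemma R_mulDl : forall x y z : R, Rmult (Rplus x y) z = Rplus (Rmult x z) (Rmult y z). Proof. exact: Rmult_plus_distr_r. Qed.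
Lemma R_one_neq0 : (R1 : R) != (R0 : R). Proof. by apply/R_eqP; exact: R1_neq_R0. Qed.
HB.instance Definition _ :=
  GRing.Zmodule_isComNzRing.Build R R_mulA R_mulC R_mul1 R_mulDl R_one_neq0.

Lemma R_mulVf (x : R) : x != R0 -> Rmult (Rinv x) x = R1.
Proof. by move=> /R_eqP h; exact: Rinv_l. Qed.
HB.instance Definition _ := GRing.ComNzRing_isField.Build R R_mulVf Rinv_0.

Local Open Scope ring_scope.

Definition spd (k : nat) (B : 'M[R]_k) : Prop :=
  B^T = B /\ forall v : 'cV[R]_k, v != 0 -> Rlt R0 ((v^T *m B *m v) 0 0).

Definition full_row_rank (m k : nat) (D : 'M[R]_(m, k)) : Prop := \rank D = m.

Definition proj_Pi (m k : nat) (B : 'M[R]_k) (D : 'M[R]_(m, k)) : 'M[R]_k :=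
  1%:M - invmx B *m D^T *m invmx (D *m invmx B *m D^T) *m D.

Definition exp_partial (k : nat) (M : 'M[R]_k) (N : nat) : 'M[R]_k :=
  \sum_(n < N.+1) (n`!%:R)^-1 *: M ^+ n.
Definition is_mexp (k : nat) (M E : 'M[R]_k) : Prop :=
  forall i j, Un_cv (fun N => exp_partial M N i j) (E i j).
Definition mexp (k : nat) (M : 'M[R]_k) : 'M[R]_k :=
  match excluded_middle_informative (exists E, is_mexp M E) with
  | left h => proj1_sig (constructive_indefinite_description _ h)
  | right _ => 0
  end.

From Stdlib Require Import Reals ClassicalEpsilon FunctionalExtensionality.
From HB Require Import structures.
From mathcomp Require Import all_boot all_order all_algebra.
Set Implicit Arguments.
Unset Strict Implicit.
Import GRing.Theory.
Local Open Scope ring_scope.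

(* The DIRK-CF scheme preserves the constraint D y = 0 for a simple algebraic
   reason: every matrix occurring on the right-hand side of the stage equations
   either is annihilated on the left by D, or maps the row space of D into
   itself up to a scalar.
   - Pi := I - B^-1 D^T (D B^-1 D^T)^-1 D satisfies D Pi = 0, because B is
     positive definite and D has full row rank, so that D B^-1 D^T is invertible.
   - Call X "D-scaled" when D X = c D for some scalar c.  D-scaled matrices are
     closed under products and inverses, and exp(M) is D-scaled whenever
     D M = 0: every partial sum of the exponential series satisfies
     D (sum_n M^n/n!) = D, and this passes to the entrywise limit.
   Hence each phi_i, phi_i phi_j^-1 is D-scaled while each convection/diffusion
   term starts with Pi, so D annihilates every summand of the stage equation
   for Y_i, whatever the (implicit) dependence of phi_i on the stages. *)

Section DScaled.
Variables (F : fieldType) (m k : nat) (D : 'M[F]_(m, k)).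

Definition D_scaled (X : 'M[F]_k) : Prop := exists c : F, D *m X = c *: D.

Lemma D_scaled1 : D_scaled 1%:M.
Proof. by exists 1; rewrite scale1r mulmx1. Qed.

Lemma D_scaledM X Y : D_scaled X -> D_scaled Y -> D_scaled (X *m Y).
Proof.
by case=> c hc [d hd]; exists (c * d); rewrite mulmxA hc -scalemxAl hd scalerA.
Qed.

(* Invertible case: D X = c D with c <> 0 gives D X^-1 = c^-1 D; a singular
   X is its own invmx, and c = 0 with X invertible forces D = 0. *)
Lemma D_scaledV X : D_scaled X -> D_scaled (invmx X).
Proof.
move=> [c hc]; have [uX | nuX] := boolP (X \in unitmx); last first.
  by rewrite invmx_out ?inE //; exists c.
have [c0 | cn0] := eqVneq c 0.
  have D0 : D = 0 by rewrite -(mulmx1 D) -(mulmxV uX) mulmxA hc c0 scale0r mul0mx.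
  by exists 0; rewrite D0 mul0mx scaler0.
exists c^-1.
by rewrite -[in RHS](mulmx1 D) -(mulmxV uX) mulmxA hc -scalemxAl scalerA mulVf // scale1r.
Qed.

Lemma D_scaled_prod n (X : 'I_n -> 'M[F]_k) :
  (forall g, D_scaled (X g)) -> D_scaled (\prod_(g < n) X g).
Proof.
move=> HX; apply: (big_ind D_scaled) => //; first exact: D_scaled1.
by move=> Y Z; rewrite -mulmxE; apply: D_scaledM.
Qed.

Lemma D_scaled_annihilate n (X : 'M[F]_k) (Y : 'M[F]_(k, n)) :
  D_scaled X -> D *m Y = 0 -> D *m (X *m Y) = 0.
Proof. by case=> c hc DY; rewrite mulmxA hc -scalemxAl DY scaler0. Qed.

End DScaled.

Lemma const_cv (c : R) : Un_cv (fun _ => c) c.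
Proof. by move=> e he; exists 0%N => N _; rewrite /R_dist Rminus_diag Rabs_R0. Qed.

Lemma big_ord_cv n (f : 'I_n -> nat -> R) (L : 'I_n -> R) :
  (forall l, Un_cv (f l) (L l)) ->
  Un_cv (fun N => \sum_(l < n) f l N) (\sum_(l < n) L l).
Proof.
elim: n f L => [|n IH] f L H.
  rewrite big_ord0.
  suff -> : (fun N => \sum_(l < 0) f l N) = (fun _ => 0) by apply: const_cv.
  by apply: functional_extensionality => N; rewrite big_ord0.
have -> : (fun N => \sum_(l < n.+1) f l N)
        = (fun N => \sum_(l < n) f (widen_ord (leqnSn n) l) N + f ord_max N).
  by apply: functional_extensionality => N; rewrite big_ord_recr.
by rewrite big_ord_recr; apply: CV_plus; [apply: IH => l |].
Qed.

Lemma mulmx_cv p q r (P : 'M[R]_(p, q)) (X : nat -> 'M[R]_(q, r)) (E : 'M[R]_(q, r)) :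
  (forall i j, Un_cv (fun N => X N i j) (E i j)) ->
  forall i j, Un_cv (fun N => (P *m X N) i j) ((P *m E) i j).
Proof.
move=> HX i j; rewrite mxE.
have -> : (fun N => (P *m X N) i j) = (fun N => \sum_(l < q) P i l * X N l j).
  by apply: functional_extensionality => N; rewrite mxE.
by apply: big_ord_cv => l; apply: CV_mult; [apply: const_cv | apply: HX].
Qed.

Lemma exp_partial_left_fixed p q (D : 'M[R]_(p, q)) (M : 'M[R]_q) N :
  D *m M = 0 -> D *m exp_partial M N = D.
Proof.
move=> DM; rewrite /exp_partial mulmx_sumr big_ord_recl big1.
  by rewrite addr0 /= expr0 fact0 invr1 scale1r mulmx1.
by move=> i _; rewrite -scalemxAr /= exprS -mulmxE mulmxA DM mul0mx scaler0.
Qed.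

Lemma is_mexp_left_fixed p q (D : 'M[R]_(p, q)) (M E : 'M[R]_q) :
  D *m M = 0 -> is_mexp M E -> D *m E = D.
Proof.
move=> DM HE; apply/matrixP => i j.
apply: (UL_sequence (fun N => (D *m exp_partial M N) i j)).
  exact: mulmx_cv.
have -> : (fun N => (D *m exp_partial M N) i j) = (fun _ => D i j).
  by apply: functional_extensionality => N; rewrite exp_partial_left_fixed.
exact: const_cv.
Qed.

Lemma mexp_D_scaled p q (D : 'M[R]_(p, q)) (M : 'M[R]_q) :
  D *m M = 0 -> D_scaled D (mexp M).
Proof.
move=> DM; rewrite /mexp; case: excluded_middle_informative => [hE | _].
  case: (constructive_indefinite_description _ hE) => E HE /=.
  by exists 1; rewrite scale1r (is_mexp_left_fixed DM HE).
by exists 0; rewrite mulmx0 scale0r.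
Qed.

Lemma spd_unit q (B : 'M[R]_q) : spd B -> B \in unitmx.
Proof.
case=> _ pd; rewrite -row_free_unit; apply: inj_row_free => v vB.
apply/eqP/negPn/negP => nv.
have nvT : v^T != 0 by apply: contra nv => /eqP h; rewrite -(trmxK v) h trmx0.
by have := pd _ nvT; rewrite trmxK vB mul0mx mxE => /Rlt_irrefl.
Qed.

Lemma spd_inv_pos q (B : 'M[R]_q) (u : 'cV[R]_q) :
  spd B -> u != 0 -> Rlt R0 ((u^T *m invmx B *m u) 0 0).
Proof.
move=> sB nu; have uB := spd_unit sB; case: sB => sym pd.
have nv : invmx B *m u != 0.
  by apply: contra nu => /eqP h; rewrite -(mul1mx u) -(mulmxV uB) -mulmxA h mulmx0.
have := pd _ nv.
by rewrite trmx_mul trmx_inv sym -!mulmxA (mulmxA B) mulmxV // mul1mx !mulmxA.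
Qed.

(* The Schur complement D B^-1 D^T is invertible: w D B^-1 D^T = 0 gives
   (D^T w^T)^T B^-1 (D^T w^T) = 0, so D^T w^T = 0 and w = 0 by full rank. *)
Lemma schur_unit p q (B : 'M[R]_q) (D : 'M[R]_(p, q)) :
  spd B -> full_row_rank D -> D *m invmx B *m D^T \in unitmx.
Proof.
move=> sB fr; rewrite -row_free_unit; apply: inj_row_free => w wM.
have wD0 : (w *m D)^T == 0.
  apply/negPn/negP => nu; have := spd_inv_pos sB nu.
  rewrite trmxK trmx_mul !mulmxA; rewrite !mulmxA in wM.
  by rewrite wM mul0mx mxE => /Rlt_irrefl.
have rfD : row_free D by rewrite /row_free fr.
by apply: (row_free_inj rfD); rewrite mul0mx; move: wD0; rewrite trmx_eq0 => /eqP.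
Qed.

Lemma D_proj_Pi p q (B : 'M[R]_q) (D : 'M[R]_(p, q)) :
  spd B -> full_row_rank D -> D *m proj_Pi B D = 0.
Proof.
move=> sB fr; rewrite /proj_Pi mulmxBr mulmx1 !mulmxA.
by rewrite mulmxV ?schur_unit // mul1mx subrr.
Qed.

Theorem mainTheorem4 (k m s J : nat)
  (B A : 'M[R]_k) (D : 'M[R]_(m, k)) (C : 'cV[R]_k -> 'M[R]_k)
  (h : R) (yn : 'cV[R]_k)
  (a : 'I_s.+1 -> 'I_s.+1 -> R)
  (alpha : 'I_s.+1 -> 'I_s.+1 -> 'I_J -> R)
  (Y : 'I_s.+1 -> 'cV[R]_k) :
  spd B ->
  full_row_rank D ->
  Rlt R0 h ->
  D *m yn = 0 ->
  a ord_max ord_max = 0 ->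
  (let Pi := proj_Pi B D in
   let Yg (i : 'I_s.+1) (g : 'I_J) := \sum_(l < s.+1) alpha l i g *: Y l in
   let phi (i : 'I_s.+1) :=
     \prod_(g < J) mexp (h *: (Pi *m invmx B *m C (Yg i (rev_ord g)))) in
   forall i : 'I_s.+1,
     Y i = phi i *m yn
           + h *: (\sum_(j < s.+1 | (j < i)%N)
                     a i j *: (phi i *m invmx (phi j) *m Pi *m invmx B *m A *m Y j))
           + (h * a i i) *: (Pi *m invmx B *m A *m Y i)) ->
  (forall i : 'I_s.+1, D *m Y i = 0) /\ D *m Y ord_max = 0.
Proof.
move=> sB fr _ Dyn _ HY.
have DPi := D_proj_Pi sB fr; set Pi := proj_Pi B D in HY DPi.
have DPiX n (X : 'M[R]_(k, n)) : D *m (Pi *m X) = 0 by rewrite mulmxA DPi mul0mx.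
have phi_scaled (Z : 'I_J -> 'cV[R]_k) :
    D_scaled D (\prod_(g < J) mexp (h *: (Pi *m invmx B *m C (Z g)))).
  apply: D_scaled_prod => g; apply: mexp_D_scaled.
  by rewrite -scalemxAr -!mulmxA DPiX scaler0.
have DY i : D *m Y i = 0.
  rewrite (HY i) /= !mulmxDr -!scalemxAr mulmx_sumr [\sum_(j < s.+1 | _) _]big1 => [|j _].
    by rewrite (D_scaled_annihilate (phi_scaled _) Dyn) -!mulmxA DPiX !scaler0 !addr0.
  rewrite -scalemxAr -!mulmxA (D_scaled_annihilate (phi_scaled _)) ?scaler0 //.
  exact: D_scaled_annihilate (D_scaledV (phi_scaled _)) (DPiX _ _).
by split.
Qed.
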